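(* Consider a draft tree generated by Greedy sampling with the acceptance probabilities produced by the UniVer Allocation Phase (defined in the context). Then the tree is locally lossless: for every non-leaf node $v$ and every $t\in\Sigma$, $$\mathbb{E}_{\mathcal{C}(v)}\big[p_v(t)\big]=\tilde p_v\,\mathcal{M}_b(t\mid v),$$ where the expectation is over the randomness of generating the children set $\mathcal{C}(v)$ (i.e. over $u_m\sim\mathcal{M}_s^\neg(\cdot\mid v)$), with $v$ and $\tilde p_v$ fixed.
   Context: Let $\Sigma$ be a finite vocabulary; $\mathcal{M}_b(\cdot\mid x)$ (target) and $\mathcal{M}_s(\cdot\mid x)$ (draft) are conditional distributions on $\Sigma$ for every context $x$. $[x]_+=\max\{x,0\}$. Draft tree: fixed rooted topology (root $r$, representing the current context); each non-root node carries a token and is identified with the token sequence on the path from $r$; $\mathcal{M}_b(\cdot\mid v),\mathcal{M}_s(\cdot\mid v)$ condition on that sequence. Greedy sampling, top-down: a non-leaf $v$ with $m$ children has children $\mathcal{C}(v)=\{u_1,\dots,u_m\}$, where $u_1,\dots,u_{m-1}$ are the $m-1$ most probable tokens under $\mathcal{M}_s(\cdot\mid v)$ (set $H_v$, ties broken by a fixed rule) and $u_m\sim\mathcal{M}_s^\neg(\cdot\mid v)$, with $\mathcal{M}_s^\neg(x\mid v)=\mathcal{M}_s(x\mid v)/\sum_{y\notin H_v}\mathcal{M}_s(y\mid v)$ for $x\notin H_v$ and $0$ for $x\in H_v$. UniVer Allocation Phase: $\tilde p_r=1$; top-down, for each non-leaf $v$ with computed $\tilde p_v\in[0,1]$: $Z_v=1-\tilde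 p_v+\sum_{x\in\Sigma}[\tilde p_v\mathcal{M}_b(x\mid v)-\mathcal{M}_s^\neg(x\mid v)]_+$; $p_v(u_m)=\min\{1,\tilde p_v\mathcal{M}_b(u_m\mid v)/\mathcal{M}_s^\neg(u_m\mid v)\}$; for every $u\in\Sigma\setminus\{u_m\}$, $p_v(u)=[\tilde p_v\mathcal{M}_b(u\mid v)-\mathcal{M}_s^\neg(u\mid v)]_+(1-p_v(u_m))/Z_v$; then $\tilde p_{u_j}=p_v(u_j)/(1-\sum_{i<j}p_v(u_i))$ for $j=1,\dots,m$. *)

From mathcomp Require Import all_boot all_order all_algebra.
Set Implicit Arguments. Unset Strict Implicit. Unset Printing Implicit Defensive.
Import Order.TTheory GRing.Theory Num.Theory.
Local Open Scope ring_scope.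

Section UniVer.
Variables (R : realFieldType) (S : finType).

Definition pospart (x : R) : R := Num.max x 0.

Definition is_distr (P : S -> R) : Prop :=
  (forall x, 0 <= P x) /\ \sum_(x : S) P x = 1.

Definition top_set (Ms : S -> R) (k : nat) (H : {set S}) : Prop :=
  #|H| = k /\ forall x y, x \in H -> y \notin H -> Ms y <= Ms x.

Definition Msneg (Ms : S -> R) (H : {set S}) (x : S) : R :=
  if x \in H then 0 else Ms x / \sum_(y | y \notin H) Ms y.

Definition Zv (pt : R) (Mb Ms : S -> R) (H : {set S}) : R :=
  1 - pt + \sum_(x : S) pospart (pt * Mb x - Msneg Ms H x).

Definition pv_last (pt : R) (Mb Ms : S -> R) (H : {set S}) (um : S) : R :=
  Num.min 1 (pt * Mb um / Msneg Ms H um).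

(* p_v(u), given the sampled last child u_m *)
Definition pv (pt : R) (Mb Ms : S -> R) (H : {set S}) (um u : S) : R :=
  if u == um then pv_last pt Mb Ms H um
  else pospart (pt * Mb u - Msneg Ms H u) * (1 - pv_last pt Mb Ms H um)
       / Zv pt Mb Ms H.

End UniVer.

From mathcomp Require Import all_boot all_order all_algebra.
From mathcomp Require Import ring.
Set Implicit Arguments. Unset Strict Implicit. Unset Printing Implicit Defensive.
Import Order.TTheory GRing.Theory Num.Theory.
Local Open Scope ring_scope.

(* Write q = M_s^neg(.|v) and a = pt * M_b(.|v).  Since q(u) p_v(u) = min(q u, a u),
   the term u_m = t contributes min(q t, a t), and every other u_m contributes
   [a t - q t]_+ [q u - a u]_+ / Z_v.  Because q and M_b are distributions,
   Z_v = \sum_u [q u - a u]_+, so when a t > q t the remaining terms add up to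
   exactly a t - q t.  Neither the choice of H_v nor the number of children plays
   any role: the identity holds for any H leaving positive M_s-mass outside. *)

Section PosPart.
Variable R : realFieldType.
Implicit Types x q a : R.

Lemma pospart_ge0 x : 0 <= pospart x.
Proof. by rewrite /pospart le_max lexx orbT. Qed.

Lemma pospart_id x : 0 <= x -> pospart x = x.
Proof. by move=> x0; apply/max_idPl. Qed.

Lemma pospart_eq0 x : x <= 0 -> pospart x = 0.
Proof. by move=> x0; apply/max_idPr. Qed.

Lemma pospart_subN x : pospart x - pospart (- x) = x.
Proof.
have [x0|x0] := lerP 0 x.
  by rewrite pospart_id // pospart_eq0 ?subr0 // oppr_le0.
by rewrite pospart_eq0 ?ltW // pospart_id ?sub0r ?opprK // oppr_ge0 ltW.
Qed.

(* At q = 0 this relies on a / 0 = 0. *)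
Lemma mulr_min1_div q a : 0 <= q -> 0 <= a -> q * Num.min 1 (a / q) = Num.min q a.
Proof.
move=> q0 a0; have [->|qn0] := eqVneq q 0.
  by rewrite mul0r; apply/esym/min_idPl.
have qp : 0 < q by rewrite lt0r qn0 q0.
have [qa|aq] := lerP q a.
  by rewrite min_l ?mulr1 // ler_pdivlMr // mul1r.
by rewrite min_r; [rewrite mulrC divfK // gt_eqF | rewrite ler_pdivrMr // mul1r ltW].
Qed.

Lemma mulr_1subr_min1_div q a : 0 <= q -> 0 <= a ->
  q * (1 - Num.min 1 (a / q)) = pospart (q - a).
Proof.
move=> q0 a0; rewrite mulrBr mulr1 mulr_min1_div //.
have [qa|aq] := lerP q a.
  by rewrite subrr pospart_eq0 // subr_le0.
by rewrite pospart_id // subr_ge0 ltW.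
Qed.

Lemma sum_pospart_sub (S : finType) (q a : S -> R) :
  \sum_x pospart (q x - a x) = \sum_x q x - \sum_x a x + \sum_x pospart (a x - q x).
Proof.
rewrite -sumrB -big_split; apply: eq_bigr => x _ /=.
by rewrite -[q x - a x in RHS](pospart_subN (q x - a x)) opprB subrK.
Qed.

End PosPart.

Section LocalLossless.
Variables (R : realFieldType) (S : finType) (Mb Ms : S -> R) (pt : R) (H : {set S}).
Hypotheses (Mb_ge0 : forall x, 0 <= Mb x) (Mb_sum1 : \sum_x Mb x = 1).
Hypotheses (Ms_ge0 : forall x, 0 <= Ms x) (Ms_outH : 0 < \sum_(y | y \notin H) Ms y).
Hypotheses (pt_ge0 : 0 <= pt) (pt_le1 : pt <= 1).

Local Notation q := (Msneg Ms H).
Local Notation Z := (Zv pt Mb Ms H).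

Lemma Msneg_ge0 x : 0 <= q x.
Proof. by rewrite /Msneg; case: ifP => // _; apply: divr_ge0 (Ms_ge0 x) (ltW Ms_outH). Qed.

Lemma Msneg_sum1 : \sum_x q x = 1.
Proof.
have -> : \sum_x q x = \sum_(x | x \notin H) Ms x / \sum_(y | y \notin H) Ms y.
  by rewrite [RHS]big_mkcond; apply: eq_bigr => x _; rewrite /Msneg; case: (x \in H).
by rewrite -mulr_suml divff // gt_eqF.
Qed.

Lemma Zv_sum_pospart : Z = \sum_x pospart (q x - pt * Mb x).
Proof. by rewrite sum_pospart_sub Msneg_sum1 -mulr_sumr Mb_sum1 mulr1. Qed.

Lemma pospart_le_Zv x : pospart (pt * Mb x - q x) <= Z.
Proof.
rewrite /Zv (bigD1 x) //= addrCA lerDl.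
by rewrite addr_ge0 ?subr_ge0 ?sumr_ge0 // => y _; apply: pospart_ge0.
Qed.

Lemma expect_pv t : \sum_um q um * pv pt Mb Ms H um t =
  Num.min (q t) (pt * Mb t)
  + pospart (pt * Mb t - q t) / Z * \sum_(u | u != t) pospart (q u - pt * Mb u).
Proof.
have a_ge0 x : 0 <= pt * Mb x by rewrite mulr_ge0.
rewrite (bigD1 t) //= /pv eqxx /pv_last mulr_min1_div ?Msneg_ge0 //.
congr (_ + _); rewrite mulr_sumr; apply: eq_bigr => u /negbTE ut.
rewrite eq_sym ut -(mulr_1subr_min1_div (Msneg_ge0 u) (a_ge0 u)) /pv_last.
by ring.
Qed.

Lemma expect_pv_lossless t : \sum_um q um * pv pt Mb Ms H um t = pt * Mb t.
Proof.
rewrite expect_pv.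
have [aq|qa] := lerP (pt * Mb t) (q t).
  by rewrite pospart_eq0 ?subr_le0 // mul0r mul0r addr0.
have at_qt : pospart (pt * Mb t - q t) = pt * Mb t - q t by rewrite pospart_id // subr_ge0 ltW.
have sum_Z : \sum_(u | u != t) pospart (q u - pt * Mb u) = Z.
  by rewrite Zv_sum_pospart [RHS](bigD1 t) //= pospart_eq0 ?add0r // subr_le0 ltW.
have Z_gt0 : 0 < Z by rewrite (lt_le_trans _ (pospart_le_Zv t)) // at_qt subr_gt0.
by rewrite at_qt sum_Z divfK ?gt_eqF // addrC subrK.
Qed.

End LocalLossless.

Theorem theorem3 (R : realFieldType) (S : finType) (Mb Ms : S -> R)
    (pt : R) (m : nat) (H : {set S}) (t : S) :
  is_distr Mb -> is_distr Ms ->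
  0 <= pt <= 1 ->
  (0 < m)%N ->
  top_set Ms m.-1 H ->
  0 < \sum_(y | y \notin H) Ms y ->
  \sum_(um : S) Msneg Ms H um * pv pt Mb Ms H um t = pt * Mb t.
Proof.
move=> [Mb_ge0 Mb_sum1] [Ms_ge0 _] /andP[pt_ge0 pt_le1] _ _ Ms_outH.
exact: expect_pv_lossless.
Qed.
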